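(* Let $(X,d)$ be a metric space and let $u,u_1,u_2,\ldots\in F_{USC}(X)$. Then: (i) If there is a dense subset $P$ of $(0,1)$ such that $[u_n]_\alpha$ Kuratowski converges to $[u]_\alpha$ for every $\alpha\in P$, then $u_n\stackrel{\Gamma}{\longrightarrow}u$. (ii) If $u_n\stackrel{\Gamma}{\longrightarrow}u$, then $[u_n]_\alpha$ Kuratowski converges to $[u]_\alpha$ for all $\alpha\in(0,1)\setminus P(u)$.
   Context: A fuzzy set on $X$ is a function $u:X\to[0,1]$, with $\alpha$-cuts $[u]_\alpha=\{x: u(x)\ge\alpha\}$ for $\alpha\in(0,1]$ and $[u]_0=\overline{\{u>0\}}$. $F_{USC}(X)$ is the set of fuzzy sets with all $\alpha$-cuts ($\alpha\in[0,1]$) non-empty and closed. For sets $C_n\subseteq X$: $\liminf_n C_n=\{x: x=\lim_n x_n, x_n\in C_n\}$, $\limsup_n C_n=\{x: x=\lim_j x_{n_j}, x_{n_j}\in C_{n_j}\}$; $C_n$ Kuratowski converges to $C$ if $C=\liminf_n C_n=\limsup_n C_n$. ${\rm end}\,u=\{(x,t)\in X\times[0,1]: u(x)\ge t\}$, with $X\times[0,1]$ metrized by $\overline{d}((x,\alpha),(y,\beta))=d(x,y)+|\alpha-\beta|$. $u_n\stackrel{\Gamma}{\longrightarrow}u$ means ${\rm end}\,u_n$ Kuratowski converges to ${\rm end}\,u$. A number $\alpha\in(0,1)$ is a platform point of $u$ if $\overline{\{u>\alpha\}}\subsetneqq[u]_\alpha$; $P(u)$ denotes the set of platform points of $u$.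 *)

From Stdlib Require Import Reals.
Open Scope R_scope.

Definition is_metric {X : Type} (d : X -> X -> R) : Prop :=
  (forall x y, 0 <= d x y) /\
  (forall x y, d x y = 0 <-> x = y) /\
  (forall x y, d x y = d y x) /\
  (forall x y z, d x z <= d x y + d y z).

Definition seq_conv {X : Type} (d : X -> X -> R) (xs : nat -> X) (x : X) : Prop :=
  forall eps, 0 < eps -> exists N, forall n, (N <= n)%nat -> d (xs n) x < eps.

Definition closure {X : Type} (d : X -> X -> R) (A : X -> Prop) : X -> Prop :=
  fun x => forall eps, 0 < eps -> exists y, A y /\ d x y < eps.

Definition is_closed {X : Type} (d : X -> X -> R) (A : X -> Prop) : Prop :=
  forall x, closure d A x -> A x.

Definition set_eq {X : Type} (A B : X -> Prop) : Prop := forall x, A x <-> B x.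

Definition K_liminf {X : Type} (d : X -> X -> R) (C : nat -> X -> Prop) : X -> Prop :=
  fun x => exists xs : nat -> X, (forall n, C n (xs n)) /\ seq_conv d xs x.

Definition K_limsup {X : Type} (d : X -> X -> R) (C : nat -> X -> Prop) : X -> Prop :=
  fun x => exists (phi : nat -> nat) (ys : nat -> X),
    (forall j, (phi j < phi (S j))%nat) /\
    (forall j, C (phi j) (ys j)) /\ seq_conv d ys x.

Definition K_conv {X : Type} (d : X -> X -> R) (C : nat -> X -> Prop) (D : X -> Prop) : Prop :=
  set_eq D (K_liminf d C) /\ set_eq D (K_limsup d C).

Definition is_fuzzy {X : Type} (u : X -> R) : Prop := forall x, 0 <= u x <= 1.

Definition cut {X : Type} (d : X -> X -> R) (u : X -> R) (a : R) : X -> Prop :=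
  fun x => if Rle_lt_dec a 0 then closure d (fun y => 0 < u y) x else a <= u x.

Definition FUSC {X : Type} (d : X -> X -> R) (u : X -> R) : Prop :=
  is_fuzzy u /\
  forall a, 0 <= a <= 1 -> (exists x, cut d u a x) /\ is_closed d (cut d u a).

Definition endo {X : Type} (u : X -> R) : (X * R) -> Prop :=
  fun p => 0 <= snd p <= 1 /\ snd p <= u (fst p).

Definition dbar {X : Type} (d : X -> X -> R) (p q : X * R) : R :=
  d (fst p) (fst q) + Rabs (snd p - snd q).

Definition Gamma_conv {X : Type} (d : X -> X -> R) (us : nat -> X -> R) (u : X -> R) : Prop :=
  K_conv (dbar d) (fun n => endo (us n)) (endo u).

Definition platform_point {X : Type} (d : X -> X -> R) (u : X -> R) (a : R) : Prop :=
  0 < a < 1 /\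
  (forall x, closure d (fun y => a < u y) x -> cut d u a x) /\
  ~ set_eq (closure d (fun y => a < u y)) (cut d u a).

Definition dense_in_01 (P : R -> Prop) : Prop :=
  (forall p, P p -> 0 < p < 1) /\
  (forall a b, 0 <= a -> a < b -> b <= 1 -> exists p, P p /\ a < p < b).

(* The cuts and the endograph are linked by (x, t) ∈ end u <-> x ∈ [u]_t for
   t ∈ (0, 1].  For (i), a point (x, t) of end u is approximated in end u_n
   through a level p ∈ P just below t, and a limit (x, t) of points of the
   end u_n with u x < t is excluded by a level p ∈ P strictly between u x and
   t.  For (ii), the upper limit of the cuts at level a lifts to height a in
   the endographs.  For the lower limit, every y with u y > a is a limit of
   points of [u_n]_a (approximate (y, u y) in end u_n); when a is not a
   platform point these y are dense in [u]_a, and a Kuratowski lower limit is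
   closed. *)

From Stdlib Require Import Reals Lra Lia Classical ClassicalEpsilon.
Open Scope R_scope.

Section Kuratowski.

Context {X : Type} (d : X -> X -> R).

Lemma K_liminf_sub_limsup (C : nat -> X -> Prop) x : K_liminf d C x -> K_limsup d C x.
Proof.
  intros [xs [HC Hxs]]. exists (fun j => j), xs.
  split; [intros j; lia | split; assumption].
Qed.

Lemma K_conv_intro (C : nat -> X -> Prop) (D : X -> Prop) :
  (forall x, D x -> K_liminf d C x) -> (forall x, K_limsup d C x -> D x) -> K_conv d C D.
Proof.
  intros Hinf Hsup; split; intros x; split; auto.
  - intros Hx; apply Hsup, K_liminf_sub_limsup, Hx.
  - intros Hx; apply K_liminf_sub_limsup, Hinf, Hx.
Qed.

Lemma K_limsup_intro (C : nat -> X -> Prop) x (phi : nat -> nat) (ys : nat -> X) N :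
  (forall j, (phi j < phi (S j))%nat) -> (forall j, (N <= j)%nat -> C (phi j) (ys j)) ->
  seq_conv d ys x -> K_limsup d C x.
Proof.
  intros Hphi HC Hys.
  exists (fun j => phi (j + N)%nat), (fun j => ys (j + N)%nat).
  split; [|split].
  - intros j; apply Hphi.
  - intros j; apply HC; lia.
  - intros eps Heps. destruct (Hys eps Heps) as [M HM].
    exists M; intros n Hn; apply HM; lia.
Qed.

Lemma exists_uniform_approximant (A : X -> Prop) z m :
  (exists y, A y) ->
  exists y, A y /\ forall k, (k < m)%nat ->
    (exists w, A w /\ d w z < / INR (S k)) -> d y z < / INR (S k).
Proof.
  intros Hne. induction m as [|m [y [Hy Hscales]]].
  - destruct Hne as [y Hy]. exists y; split; [exact Hy | intros k Hk; lia].
  - destruct (classic (exists w, A w /\ d w z < / INR (S m))) as [[w [Hw Hwz]] | Hfar].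
    + exists w; split; [exact Hw|]. intros k Hk _.
      eapply Rlt_le_trans; [exact Hwz|].
      apply Rinv_le_contravar; [apply lt_0_INR; lia | apply le_INR; lia].
    + exists y; split; [exact Hy|]. intros k Hk Hnear.
      destruct (Nat.eq_dec k m) as [-> | Hkm]; [contradiction|].
      apply Hscales; [lia | exact Hnear].
Qed.

Lemma K_liminf_intro (C : nat -> X -> Prop) z :
  (forall n, exists y, C n y) ->
  (forall eps, 0 < eps -> exists N, forall n, (N <= n)%nat -> exists y, C n y /\ d y z < eps) ->
  K_liminf d C z.
Proof.
  intros Hne Hnear.
  assert (Happrox : forall n, exists y, C n y /\ forall k, (k < n)%nat ->
            (exists w, C n w /\ d w z < / INR (S k)) -> d y z < / INR (S k))
    by (intros n; apply exists_uniform_approximant, Hne).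
  destruct (choice _ Happrox) as [ys Hys].
  exists ys; split; [intros n; apply Hys|].
  intros eps Heps.
  destruct (archimed_cor1 eps Heps) as [[|k] [Hk Hk0]]; [lia|].
  destruct (Hnear (/ INR (S k))) as [N HN]; [apply Rinv_0_lt_compat, lt_0_INR; lia|].
  exists (Nat.max N (S k)); intros n Hn.
  eapply Rlt_trans; [|exact Hk].
  apply Hys; [lia | apply HN; lia].
Qed.

Lemma closure_minimal (A B : X -> Prop) :
  (forall x, A x -> B x) -> is_closed d B -> forall x, closure d A x -> B x.
Proof.
  intros HAB HB x Hx. apply HB. intros eps Heps.
  destruct (Hx eps Heps) as [y [Hy Hxy]]. exists y; split; [apply HAB, Hy | exact Hxy].
Qed.

Hypothesis d_sym : forall x y, d x y = d y x.
Hypothesis d_triangle : forall x y z, d x z <= d x y + d y z.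

Lemma K_liminf_closed (C : nat -> X -> Prop) :
  (forall n, exists y, C n y) -> is_closed d (K_liminf d C).
Proof.
  intros Hne z Hz. apply K_liminf_intro; [exact Hne|]. intros eps Heps.
  destruct (Hz (eps / 2)) as [y [[xs [HC Hxs]] Hzy]]; [lra|].
  destruct (Hxs (eps / 2)) as [N HN]; [lra|].
  exists N; intros n Hn; exists (xs n); split; [apply HC|].
  pose proof (HN n Hn). pose proof (d_triangle (xs n) y z) as Htri.
  rewrite (d_sym y z) in Htri. lra.
Qed.

End Kuratowski.

Lemma seq_conv_eventually_gt (s : nat -> R) t p :
  seq_conv R_dist s t -> p < t -> exists N, forall n, (N <= n)%nat -> p < s n.
Proof.
  intros Hs Hpt. destruct (Hs (t - p)) as [N HN]; [lra|].
  exists N; intros n Hn. specialize (HN n Hn). unfold R_dist in HN.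
  apply Rabs_def2 in HN. lra.
Qed.

Lemma seq_conv_within (s : nat -> R) t a b :
  (forall n, a <= s n <= b) -> seq_conv R_dist s t -> a <= t <= b.
Proof.
  intros Hab Hs. split; apply Rnot_lt_le; intros Hout.
  - destruct (Hs (a - t)) as [N HN]; [lra|].
    specialize (HN N (le_n N)). unfold R_dist in HN. apply Rabs_def2 in HN.
    specialize (Hab N). lra.
  - destruct (Hs (t - b)) as [N HN]; [lra|].
    specialize (HN N (le_n N)). unfold R_dist in HN. apply Rabs_def2 in HN.
    specialize (Hab N). lra.
Qed.

Section Endograph.

Context {X : Type} (d : X -> X -> R).

Lemma seq_conv_dbar_pair (xs : nat -> X) x t :
  seq_conv d xs x -> seq_conv (dbar d) (fun n => (xs n, t)) (x, t).
Proof.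
  intros Hxs eps Heps. destruct (Hxs eps Heps) as [N HN].
  exists N; intros n Hn. unfold dbar; simpl.
  rewrite Rminus_diag, Rabs_R0, Rplus_0_r. apply HN, Hn.
Qed.

Hypothesis d_nonneg : forall x y, 0 <= d x y.

Lemma seq_conv_dbar_fst (ps : nat -> X * R) p :
  seq_conv (dbar d) ps p -> seq_conv d (fun n => fst (ps n)) (fst p).
Proof.
  intros Hps eps Heps. destruct (Hps eps Heps) as [N HN].
  exists N; intros n Hn. specialize (HN n Hn). unfold dbar in HN.
  pose proof (Rabs_pos (snd (ps n) - snd p)). lra.
Qed.

Lemma seq_conv_dbar_snd (ps : nat -> X * R) p :
  seq_conv (dbar d) ps p -> seq_conv R_dist (fun n => snd (ps n)) (snd p).
Proof.
  intros Hps eps Heps. destruct (Hps eps Heps) as [N HN].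
  exists N; intros n Hn. specialize (HN n Hn). unfold dbar in HN. unfold R_dist.
  pose proof (d_nonneg (fst (ps n)) (fst p)). lra.
Qed.

Lemma cut_pos_iff (u : X -> R) a x : 0 < a -> cut d u a x <-> a <= u x.
Proof. intros Ha; unfold cut; destruct (Rle_lt_dec a 0); [lra | tauto]. Qed.

Lemma endo_pair_iff_cut (u : X -> R) x t : 0 < t <= 1 -> endo u (x, t) <-> cut d u t x.
Proof.
  intros Ht. rewrite cut_pos_iff by lra. unfold endo; simpl. split; [tauto|].
  intros Hxt; repeat split; lra.
Qed.

Lemma endo_sub_liminf_of_dense_cuts (P : R -> Prop) (u : X -> R) (us : nat -> X -> R) :
  (forall x, d x x = 0) -> (forall n, is_fuzzy (us n)) -> dense_in_01 P ->
  (forall p, P p -> forall x, cut d u p x -> K_liminf d (fun n => cut d (us n) p) x) ->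
  forall q, endo u q -> K_liminf (dbar d) (fun n => endo (us n)) q.
Proof.
  intros Hrefl Hfuzzy [HP01 HPdense] Hinf [x t] [[Ht0 Ht1] Htu]; simpl in *.
  assert (Hbottom : forall n, endo (us n) (x, 0))
    by (intros n; split; simpl; [lra | apply Hfuzzy]).
  apply K_liminf_intro; [intros n; exists (x, 0); apply Hbottom|].
  intros eps Heps. destruct (Rle_lt_dec t 0) as [Ht | Ht].
  - exists 0%nat; intros n _; exists (x, 0); split; [apply Hbottom|].
    unfold dbar; simpl. rewrite Hrefl. replace (0 - t) with 0 by lra.
    rewrite Rabs_R0. lra.
  - destruct (HPdense (Rmax 0 (t - eps / 2)) t) as [p [Pp [Hp_lo Hp_hi]]];
      [apply Rmax_l | apply Rmax_lub_lt; lra | lra |].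
    pose proof (Rmax_r 0 (t - eps / 2)). pose proof (HP01 p Pp).
    destruct (Hinf p Pp x) as [xs [Hxs Hconv]]; [apply cut_pos_iff; lra|].
    destruct (Hconv (eps / 2)) as [N HN]; [lra|].
    exists N; intros n Hn; exists (xs n, p); split.
    + apply endo_pair_iff_cut; [lra | apply Hxs].
    + unfold dbar; simpl. rewrite Rabs_left by lra. specialize (HN n Hn). lra.
Qed.

Lemma limsup_endo_sub_endo_of_dense_cuts (P : R -> Prop) (u : X -> R) (us : nat -> X -> R) :
  is_fuzzy u -> dense_in_01 P ->
  (forall p, P p -> forall x, K_limsup d (fun n => cut d (us n) p) x -> cut d u p x) ->
  forall q, K_limsup (dbar d) (fun n => endo (us n)) q -> endo u q.
Proof.
  intros Hfuzzy [HP01 HPdense] Hsup [x t] [phi [ys [Hphi [Hys Hconv]]]].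
  pose proof (seq_conv_dbar_fst ys (x, t) Hconv) as Hfst.
  pose proof (seq_conv_dbar_snd ys (x, t) Hconv) as Hsnd. simpl in Hfst, Hsnd.
  assert (Ht : 0 <= t <= 1) by exact (seq_conv_within _ _ _ _ (fun j => proj1 (Hys j)) Hsnd).
  split; [exact Ht|]. simpl. apply Rnot_lt_le; intros Hlt.
  destruct (HPdense (u x) t) as [p [Pp [Hxp Hpt]]]; [apply Hfuzzy | exact Hlt | apply Ht |].
  pose proof (HP01 p Pp).
  destruct (seq_conv_eventually_gt _ _ _ Hsnd Hpt) as [N HN].
  assert (Hx : cut d u p x).
  { apply (Hsup p Pp), (K_limsup_intro d _ x phi (fun j => fst (ys j)) N Hphi); [|exact Hfst].
    intros j Hj. apply cut_pos_iff; [lra|].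
    pose proof (HN j Hj). pose proof (proj2 (Hys j)). lra. }
  apply cut_pos_iff in Hx; lra.
Qed.

Lemma superlevel_sub_liminf_cuts (u : X -> R) (us : nat -> X -> R) a :
  is_fuzzy u -> 0 < a -> (forall n, exists y, cut d (us n) a y) ->
  (forall q, endo u q -> K_liminf (dbar d) (fun n => endo (us n)) q) ->
  forall y, a < u y -> K_liminf d (fun n => cut d (us n) a) y.
Proof.
  intros Hfuzzy Ha Hne Hinf y Hy.
  destruct (Hinf (y, u y)) as [zs [Hzs Hconv]];
    [split; simpl; [apply Hfuzzy | lra]|].
  destruct (seq_conv_eventually_gt _ _ _ (seq_conv_dbar_snd zs (y, u y) Hconv) Hy)
    as [N HN].
  apply K_liminf_intro; [exact Hne|]. intros eps Heps.
  destruct (seq_conv_dbar_fst zs (y, u y) Hconv eps Heps) as [M HM].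
  exists (Nat.max N M); intros n Hn; exists (fst (zs n)); split.
  - apply cut_pos_iff; [exact Ha|].
    pose proof (HN n ltac:(lia)). pose proof (proj2 (Hzs n)). lra.
  - apply HM; lia.
Qed.

Lemma cut_sub_closure_superlevel (u : X -> R) a :
  FUSC d u -> 0 < a < 1 -> ~ platform_point d u a ->
  forall x, cut d u a x -> closure d (fun y => a < u y) x.
Proof.
  intros [_ Hcuts] Ha Hnp.
  assert (Hsub : forall x, closure d (fun y => a < u y) x -> cut d u a x).
  { apply closure_minimal; [intros y Hy; apply cut_pos_iff; lra |].
    apply Hcuts; lra. }
  intros x Hx. apply NNPP; intros Hnot.
  apply Hnp. split; [exact Ha | split; [exact Hsub|]].
  intros Heq. apply Hnot, Heq, Hx.
Qed.

Lemma limsup_cuts_sub_cut_of_limsup_endo (u : X -> R) (us : nat -> X -> R) a :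
  0 < a <= 1 ->
  (forall q, K_limsup (dbar d) (fun n => endo (us n)) q -> endo u q) ->
  forall x, K_limsup d (fun n => cut d (us n) a) x -> cut d u a x.
Proof.
  intros Ha Hsup x [phi [ys [Hphi [Hys Hconv]]]].
  apply (endo_pair_iff_cut u x a Ha), Hsup.
  exists phi, (fun j => (ys j, a)). split; [exact Hphi | split].
  - intros j; apply endo_pair_iff_cut; [exact Ha | apply Hys].
  - apply seq_conv_dbar_pair, Hconv.
Qed.

End Endograph.

Theorem theorem3p6 (X : Type) (d : X -> X -> R) (u : X -> R) (us : nat -> X -> R) :
  is_metric d -> FUSC d u -> (forall n, FUSC d (us n)) ->
  ((exists P : R -> Prop, dense_in_01 P /\
      (forall a, P a -> K_conv d (fun n => cut d (us n) a) (cut d u a))) ->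
    Gamma_conv d us u) /\
  (Gamma_conv d us u ->
    forall a, 0 < a < 1 -> ~ platform_point d u a ->
      K_conv d (fun n => cut d (us n) a) (cut d u a)).
Proof.
  intros [Hpos [Hzero [Hsym Htri]]] Hu Hus.
  assert (Hrefl : forall x, d x x = 0) by (intros x; apply Hzero; reflexivity).
  split.
  - intros [P [HP Hcuts]]. apply K_conv_intro.
    + apply (endo_sub_liminf_of_dense_cuts d P); auto; [intros n; apply Hus|].
      intros p Pp x; apply (proj1 (Hcuts p Pp) x).
    + apply (limsup_endo_sub_endo_of_dense_cuts d Hpos P); [apply Hu | exact HP|].
      intros p Pp x; apply (proj2 (Hcuts p Pp) x).
  - intros [Hinf Hsup] a Ha Hnp.
    assert (Hne : forall n, exists y, cut d (us n) a y) by (intros n; apply (Hus n); lra).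
    apply K_conv_intro.
    + intros x Hx. apply (closure_minimal d (fun y => a < u y)).
      * apply (superlevel_sub_liminf_cuts d Hpos); [apply Hu | lra | exact Hne |].
        intros q; apply Hinf.
      * apply K_liminf_closed; assumption.
      * apply (cut_sub_closure_superlevel d u a Hu Ha Hnp x Hx).
    + apply limsup_cuts_sub_cut_of_limsup_endo; [lra|].
      intros q Hq; apply Hsup, Hq.
Qed.
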